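(* Let $X$ be a topological space (no separation axioms assumed) that is both locally $\mathfrak{c}$ and $\mathfrak{c}$-fair, and suppose $t(x,X)<\operatorname{cf}(\mathfrak{c})$ for every $x\in X$. If $|X|>\mathfrak{c}$, then there exists a clopen subset $U$ of $X$ with $|U|=L(U)=\mathfrak{c}$.
   Context: A space $X$ is locally $\mathfrak{c}$ if every point has a neighbourhood of cardinality $\le\mathfrak{c}$. $X$ is $\mathfrak{c}$-fair if the closure of every subset of $X$ of cardinality $\mathfrak{c}$ also has cardinality $\mathfrak{c}$. $t(x,X)$ denotes the tightness of $X$ at $x$, and $L(U)$ the Lindelöf number of $U$ (the least infinite cardinal $\lambda$ such that every open cover of $U$ has a subcover of size $\le\lambda$). *)

(* The cardinal c (continuum) is represented by
   the set [set: set nat] (|P(omega)| = 2^aleph0 = c). *)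
From HB Require Import structures.
From mathcomp Require Import all_boot all_order all_algebra.
From mathcomp Require Import all_classical all_reals all_analysis.
Set Implicit Arguments. Unset Strict Implicit. Unset Printing Implicit Defensive.
Local Open Scope classical_set_scope.
Local Open Scope card_scope.

Definition cont : set (set nat) := [set: set nat].

Definition locally_c (T : topologicalType) : Prop :=
  forall x : T, exists N : set T, nbhs x N /\ N #<= cont.

Definition c_fair (T : topologicalType) : Prop :=
  forall A : set T, A #= cont -> closure A #= cont.

Definition tightness_le (T : topologicalType) (x : T) {U} (K : set U) : Prop :=
  forall A : set T, closure A x ->
    exists B : set T, B `<=` A /\ B #<= K /\ closure B x.

(* |K| < cf(c) : c is not the union of a K-indexed family of sets each of
   cardinality < c *)
Definition lt_cf_cont {U} (K : set U) : Prop :=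
  ~ exists F : U -> set (set nat),
      (forall k, K k -> ~ (cont #<= F k)) /\ \bigcup_(k in K) F k = cont.

Definition tightness_lt_cf_cont (T : topologicalType) (x : T) : Prop :=
  exists K : set (set nat), lt_cf_cont K /\ tightness_le x K.

Definition lindelof_le (T : topologicalType) (U : set T) {V} (K : set V) : Prop :=
  forall C : set (set T), (forall W, C W -> open W) ->
    U `<=` \bigcup_(W in C) W ->
    exists D : set (set T), D `<=` C /\ D #<= K /\ U `<=` \bigcup_(W in D) W.

Definition lindelof_number_eq_cont (T : topologicalType) (U : set T) : Prop :=
  lindelof_le U cont /\
  ~ (exists K : set (set nat), ~ (cont #<= K) /\ [set: nat] #<= K /\ lindelof_le U K).

From HB Require Import structures.
From mathcomp Require Import all_boot all_order all_algebra.
From mathcomp Require Import all_classical all_reals all_analysis.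
From mathcomp Require Import wochoice.
Local Open Scope classical_set_scope.
Local Open Scope card_scope.

Set Implicit Arguments. Unset Strict Implicit. Unset Printing Implicit Defensive.

(* Index stages by the initial ordinal C of c and build an increasing tower
   of closed sets Q_t: Q_t is the closure of a fixed set of size c, of the
   small open neighbourhoods of all points of earlier stages, and of a point
   outside all earlier stages.  Since X is c-fair each Q_t has size c, and
   since |X| > c the new point always exists.  The union U of the tower is
   open because each point of Q_s has its neighbourhood inside every later
   stage and C has no last element, and closed because, by tightness
   < cf(c), a point of the closure of U is in the closure of fewer than cf(c)
   points, all lying in one stage.  Finally |U| = c, and for lambda < c some
   sub-tower J is closed under upper bounds of lambda-sized sets; covering U
   by the neighbourhood sets of the stages of J and the complement of the
   (closed) union of J gives a cover with no subcover of size lambda, since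
   lambda of its members lie below some stage of J and miss the new point of
   a later one. *)

(** * Cardinal arithmetic *)

Lemma card_le_of_inj T U (A : set T) (B : set U) (f : T -> U) :
  (forall a, A a -> B (f a)) ->
  (forall a b, A a -> A b -> f a = f b -> a = b) -> A #<= B.
Proof.
move=> fAB finj.
have fA : f @` A #= A.
  by apply: inj_card_eq => a b /set_mem Aa /set_mem Ab; exact: finj.
apply: (@card_le_trans _ _ _ (f @` A)); first by move: fA => /card_esym/card_eqPle[].
by apply: subset_card_le => _ [a Aa <-]; exact: fAB.
Qed.

Lemma card_le_inj T U (u0 : U) (A : set T) (B : set U) : A #<= B ->
  exists f : T -> U, (forall a, A a -> B (f a)) /\
    (forall a b, A a -> A b -> f a = f b -> a = b).
Proof.
move: u0 B; elim/Ppointed: U => U u0 B; first by have [] := (any u0 : False).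
move=> /pcard_leP/injfunPex[f fAB finj]; exists f; split; first exact: fAB.
by move=> a b Aa Ab; apply: finj; rewrite inE.
Qed.

Lemma card_le_nonempty T U (A : set T) (B : set U) : A #<= B -> A !=set0 -> B !=set0.
Proof.
move=> AB [a Aa]; apply/set0P/eqP => B0; move: AB; rewrite B0 => /card_le0P A0.
by move: Aa; rewrite A0.
Qed.

Lemma set1_card_le T U (x : T) (B : set U) : B !=set0 -> [set x] #<= B.
Proof. by move=> [b Bb]; apply: (@card_le_of_inj _ _ _ _ (fun=> b)) => // a a' -> ->. Qed.

Lemma card_le_setX T T' U U' (A : set T) (A' : set T') (B : set U) (B' : set U') :
  A #<= A' -> B #<= B' -> A `*` B #<= A' `*` B'.
Proof.
move=> AA BB.
have [->|/set0P AN] := eqVneq A set0; first by rewrite set0X; exact: card_ge0.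
have [->|/set0P BN] := eqVneq B set0; first by rewrite setX0; exact: card_ge0.
have [a' _] := card_le_nonempty AA AN; have [b' _] := card_le_nonempty BB BN.
have [f [fA finj]] := card_le_inj a' AA; have [g [gB ginj]] := card_le_inj b' BB.
apply: (@card_le_of_inj _ _ _ _ (fun p => (f p.1, g p.2))).
  by move=> [a b] [/= Aa Bb]; split; [exact: fA|exact: gB].
move=> [a b] [c d] [/= Aa Bb] [/= Ac Bd] [/finj-> // /ginj-> //].
Qed.

Section PartialBijections.
Variables (T U : Type) (A : set T) (B : set U).

Definition partial_bij (G : set (T * U)) := [/\ G `<=` A `*` B,
  forall a b b', G (a, b) -> G (a, b') -> b = b' &
  forall a a' b, G (a, b) -> G (a', b) -> a = a'].

Lemma partial_bij_card_le G : partial_bij G ->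
  (forall a, A a -> exists b, G (a, b)) -> A #<= B.
Proof.
move=> [GAB Gf Gi] Gtot.
have [->|/set0P[a0 /Gtot[b0 _]]] := eqVneq A set0; first exact: card_ge0.
have /choice[f hf] : forall a, exists b, A a -> G (a, b).
  by move=> a; have [/Gtot[b Gab]|nAa] := pselect (A a); [exists b|exists b0].
apply: (@card_le_of_inj _ _ _ _ f); first by move=> a /hf/GAB[].
by move=> a a' /hf Ga /hf Ga' fa; apply: (Gi _ _ (f a)) => //; rewrite fa.
Qed.

End PartialBijections.

Lemma partial_bij_swap T U (A : set T) (B : set U) G :
  partial_bij A B G -> partial_bij B A [set q | G (q.2, q.1)].
Proof.
move=> [GAB Gf Gi]; split; last 2 first.
- by move=> b a a' /= Gab Ga'b; exact: Gi Gab Ga'b.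
- by move=> b b' a /= Gab Gab'; exact: Gf Gab Gab'.
by move=> [b a] /GAB[].
Qed.

Lemma card_le_total T U (A : set T) (B : set U) : A #<= B \/ B #<= A.
Proof.
have [M [[MAB Mf Mi] Mmax]] : exists M, partial_bij A B M /\
    forall G, M `<` G -> ~ partial_bij A B G.
  apply: Zorn_bigcup => F FP Ftot; split.
  - by move=> p [G /FP[+ _ _] Gp]; apply.
  - move=> a b b' [G1 F1 G1ab] [G2 F2 G2ab'].
    have [s12|s21] := Ftot _ _ F1 F2.
      by have [_ f _] := FP _ F2; apply: f (s12 _ G1ab) G2ab'.
    by have [_ f _] := FP _ F1; apply: f G1ab (s21 _ G2ab').
  - move=> a a' b [G1 F1 G1ab] [G2 F2 G2ab'].
    have [s12|s21] := Ftot _ _ F1 F2.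
      by have [_ _ f] := FP _ F2; apply: f (s12 _ G1ab) G2ab'.
    by have [_ _ f] := FP _ F1; apply: f G1ab (s21 _ G2ab').
have [Atot|] := pselect (forall a, A a -> exists b, M (a, b)).
  by left; apply: partial_bij_card_le Atot.
move=> /existsNP[a1 /not_implyP[Aa1 /forallNP a1_free]]; right.
apply: (partial_bij_card_le (partial_bij_swap (And3 MAB Mf Mi))) => b1 Bb1.
apply: contrapT => /forallNP b1_free; apply: (Mmax (M `|` [set (a1, b1)])).
  split; first by move=> p Mp; left.
  by move=> /(_ (a1, b1)) M_a1b1; apply: (a1_free b1); apply: M_a1b1; right.
split.
- by move=> p [/MAB//|->].
- move=> a b b' [Mab|[? ?]] [Mab'|[? ?]]; subst => //.
  + exact: Mf Mab Mab'.
  + by have := a1_free b.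
  + by have := a1_free b'.
- move=> a a' b [Mab|[? ?]] [Ma'b|[? ?]]; subst => //.
  + exact: Mi Mab Ma'b.
  + by have := b1_free a.
  + by have := b1_free a'.
Qed.

Lemma bigcup_card_le_sq I T W (K : set W) (S : set I) (F : I -> set T) :
  K `*` K #<= K -> S #<= K -> (forall i, S i -> F i #<= K) ->
  \bigcup_(i in S) F i #<= K.
Proof.
move=> KK SK FK.
have [->|/set0P[i0 Si0]] := eqVneq S set0; first by rewrite bigcup_set0; exact: card_ge0.
have [w0 _] := card_le_nonempty SK (ex_intro _ i0 Si0).
have [e [eK einj]] := card_le_inj w0 SK.
have /choice[g hg] : forall i, exists g : T -> W, S i ->
    (forall z, F i z -> K (g z)) /\ (forall a b, F i a -> F i b -> g a = g b -> a = b).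
  move=> i; have [Si|] := pselect (S i); last by exists (fun=> w0).
  by have [g hg] := card_le_inj w0 (FK i Si); exists g.
have /choice[s hs] : forall z, exists i, (\bigcup_(i in S) F i) z -> S i /\ F i z.
  move=> z; have [[i Si Fiz]|] := pselect ((\bigcup_(i in S) F i) z); first by exists i.
  by exists i0.
apply: (card_le_trans _ KK).
apply: (@card_le_of_inj _ _ _ _ (fun z => (e (s z), g (s z) z))).
  move=> z /hs[Ss Fs]; split; first exact: eK.
  by have [+ _] := hg _ Ss; apply.
move=> a b /hs[Sa Fa] /hs[Sb Fb] [/einj-/(_ Sa Sb) sab gab].
have [_ ginj] := hg _ Sa; rewrite -sab in Fb gab; exact: ginj.
Qed.

Lemma setU_card_le_sq T W (K : set W) (A B : set T) :
  K `*` K #<= K -> [set: nat] #<= K -> A #<= K -> B #<= K -> A `|` B #<= K.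
Proof.
move=> KK NK AK BK.
have -> : A `|` B = \bigcup_(b in [set: bool]) (if b then A else B).
  apply/seteqP; split; first by move=> x [Ax|Bx]; [exists true|exists false].
  by move=> x [[] _ /= ?]; [left|right].
apply: bigcup_card_le_sq => //; last by case.
apply: card_le_trans NK; apply: (@card_le_of_inj _ _ _ _ nat_of_bool) => //.
by case; case.
Qed.

Section Hessenberg.
Variable T : Type.
Implicit Types (D E K : set T) (G : set ((T * T) * T)).

Definition pairing_on D G := [/\
  forall p z z', G (p, z) -> G (p, z') -> z = z',
  forall p p' z, G (p, z) -> G (p', z) -> p = p',
  forall x y, (exists z, G ((x, y), z)) <-> D x /\ D y &
  forall p z, G (p, z) -> D z].

Definition pairing_dom G := [set x | exists z, G ((x, x), z)].

Lemma pairing_domE D G : pairing_on D G -> pairing_dom G = D.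
Proof.
move=> [_ _ Gd _]; apply/seteqP; split=> x; first by move=> /Gd[].
by move=> Dx; apply/Gd.
Qed.

Lemma pairing_on_card D G : pairing_on D G -> D `*` D #<= D.
Proof.
move=> [_ Gi Gd Gr].
have /choice[m hm] : forall p : T * T, exists z, D p.1 /\ D p.2 -> G (p, z).
  move=> [x y]; have [/(Gd x y)[z Gz]|] := pselect (D x /\ D y); first by exists z.
  by move=> nD; exists x.
apply: (@card_le_of_inj _ _ _ _ m); first by move=> p /hm /Gr.
by move=> p q /hm Gp /hm Gq mpq; apply: Gi Gp _; rewrite mpq.
Qed.

Lemma pairing_on_bigcup (F : set (set ((T * T) * T))) :
  total_on F subset -> (forall G, F G -> pairing_on (pairing_dom G) G) ->
  pairing_on (pairing_dom (\bigcup_(G in F) G)) (\bigcup_(G in F) G).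
Proof.
move=> Ftot FP.
have domU G : F G -> pairing_dom G `<=` pairing_dom (\bigcup_(G in F) G).
  by move=> FG x [z Gz]; exists z, G.
split.
- move=> p z z' [G FG Gz] [G' FG' Gz'].
  have [GG'|G'G] := Ftot _ _ FG FG'.
    by have [f _ _ _] := FP _ FG'; apply: f (GG' _ Gz) Gz'.
  by have [f _ _ _] := FP _ FG; apply: f Gz (G'G _ Gz').
- move=> p p' z [G FG Gz] [G' FG' Gz'].
  have [GG'|G'G] := Ftot _ _ FG FG'.
    by have [_ i _ _] := FP _ FG'; apply: i (GG' _ Gz) Gz'.
  by have [_ i _ _] := FP _ FG; apply: i Gz (G'G _ Gz').
- move=> x y; split.
    move=> [z [G FG Gz]]; have [_ _ d _] := FP _ FG.
    by have [dx dy] := (d x y).1 (ex_intro _ z Gz); split; apply: domU FG _ _.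
  move=> [[zx [G FG Gx]] [zy [G' FG' Gy]]].
  have [GG'|G'G] := Ftot _ _ FG FG'.
    have [_ _ d _] := FP _ FG'.
    have [|z Gz] := (d x y).2; last by exists z, G'.
    by split; [exists zx; exact: GG'|exists zy].
  have [_ _ d _] := FP _ FG.
  have [|z Gz] := (d x y).2; last by exists z, G.
  by split; [exists zx|exists zy; exact: G'G].
- move=> p z [G FG Gz]; have [_ _ _ r] := FP _ FG.
  exact: domU FG _ (r _ _ Gz).
Qed.

Lemma pairing_on_setU D E G (v : T * T -> T) :
  let N := ((D `|` E) `*` (D `|` E)) `\` (D `*` D) in
  pairing_on D G -> (forall x, E x -> ~ D x) ->
  (forall p, N p -> E (v p)) -> (forall p q, N p -> N q -> v p = v q -> p = q) ->
  pairing_on (D `|` E) (G `|` [set q | N q.1 /\ q.2 = v q.1]).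
Proof.
move=> N [Gf Gi Gd Gr] ED vE vinj.
have GD p z : G (p, z) -> D p.1 /\ D p.2 by case: p => x y Gz; apply/Gd; exists z.
split.
- move=> p z z' [Gz|[Np /= ->]] [Gz'|[Np' /= ->]] //.
  + exact: Gf Gz Gz'.
  + by case: Np' => _ /(_ (GD _ _ Gz)).
  + by case: Np => _ /(_ (GD _ _ Gz')).
- move=> p p' z [Gz|[Np /= ez]] [Gz'|[Np' /= ez']].
  + exact: Gi Gz Gz'.
  + by have := ED _ (vE _ Np'); rewrite -ez'; move/(_ (Gr _ _ Gz)).
  + by have := ED _ (vE _ Np); rewrite -ez; move/(_ (Gr _ _ Gz')).
  + by apply: vinj Np Np' _; rewrite -ez -ez'.
- move=> x y; split.
    by move=> [z [/GD[/= Dx Dy]|[[[/= ? ?] _] _]]]; split => //; left.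
  move=> [Dx Dy]; have [[Dx' Dy']|nD] := pselect (D x /\ D y).
    by have [z Gz] := (Gd x y).2 (conj Dx' Dy'); exists z; left.
  by exists (v (x, y)); right.
- by move=> p z [/Gr Dz|[/vE Ev /= ->]]; [left|right].
Qed.

Lemma pairing_extension_card_le D E : D `*` D #<= D -> [set: nat] #<= D ->
  E #<= D -> ((D `|` E) `*` (D `|` E)) `\` (D `*` D) #<= D.
Proof.
move=> DD ND ED.
have DED : D `|` E #<= D by apply: setU_card_le_sq => //; exact: card_lexx.
apply: (@card_le_trans _ _ _ ((D `*` E) `|` (E `*` (D `|` E)))).
  apply: subset_card_le => -[x y] [[/= [Dx|Ex] DEy] nD]; last by right.
  by case: DEy => [Dy|Ey]; [case: nD|left].
apply: setU_card_le_sq => //.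
  by apply: card_le_trans DD; apply: card_le_setX => //; exact: card_lexx.
by apply: card_le_trans DD; exact: card_le_setX.
Qed.

Lemma pairing_on_extend K G : pairing_on (pairing_dom G) G ->
  pairing_dom G `<=` K -> [set: nat] #<= pairing_dom G ->
  pairing_dom G #<= K `\` pairing_dom G ->
  exists G', [/\ G `<` G', pairing_on (pairing_dom G') G' & pairing_dom G' `<=` K].
Proof.
set D := pairing_dom G => GP DK ND DKD.
have [x0 _] := card_le_nonempty ND (ex_intro _ 0%N I).
have [h [hK hinj]] := card_le_inj x0 DKD.
pose E := h @` D.
have ED x : E x -> ~ D x by move=> [y Dy <-]; have [] := hK y Dy.
have EK : E `<=` K by move=> _ [y Dy <-]; have [] := hK y Dy.
have DE : D #<= E by apply: (@card_le_of_inj _ _ _ _ h) => // y Dy; exists y.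
pose N := ((D `|` E) `*` (D `|` E)) `\` (D `*` D).
have NE : N #<= E.
  apply: card_le_trans DE.
  exact: pairing_extension_card_le (pairing_on_card GP) ND (card_image_le h D).
have [v [vE vinj]] := card_le_inj x0 NE.
pose G' := G `|` [set q | N q.1 /\ q.2 = v q.1].
have G'P : pairing_on (D `|` E) G' := pairing_on_setU GP ED vE vinj.
exists G'; rewrite (pairing_domE G'P); split => //; last by move=> x [/DK|/EK].
split; first by move=> q Gq; left.
have [x Dx] := card_le_nonempty ND (ex_intro _ 0%N I).
have Ehx : E (h x) by exists x.
have NEhx : N (h x, h x) by split; [split; right|move=> [/= /(ED _ Ehx)]].
move=> /(_ ((h x, h x), v (h x, h x))) G'G.
have /G'G : G' ((h x, h x), v (h x, h x)) by right.
by move=> Gh; apply: (ED _ Ehx); rewrite -(pairing_domE GP); exists (v (h x, h x)).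
Qed.

Lemma exists_pairing_on_nat K : [set: nat] #<= K ->
  exists G, [/\ G !=set0, pairing_on (pairing_dom G) G, pairing_dom G `<=` K
              & [set: nat] #<= pairing_dom G].
Proof.
move=> NK; have [t0 _] := card_le_nonempty NK (ex_intro _ 0%N I).
have [e [eK einj]] := card_le_inj t0 NK.
have {}einj a b : e a = e b -> a = b by exact: einj.
have /(card_le_inj 0%N)[pi [_ piinj]] : [set: nat] `*` [set: nat] #<= [set: nat].
  by apply: countableX; exact: card_lexx.
have {}piinj p q : pi p = pi q -> p = q by exact: piinj.
pose G := [set q | exists a b, q = ((e a, e b), e (pi (a, b)))].
have GP : pairing_on (range e) G.
  split.
  - by move=> p z z' [a [b [-> ->]]] [a' [b' [/einj-> /einj-> ->]]].
  - by move=> p p' z [a [b [-> ->]]] [a' [b' [-> /einj/piinj [-> ->]]]].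
  - move=> x y; split; first by move=> [z [a [b [[-> ->] _]]]]; split; [exists a|exists b].
    by move=> [[a _ <-] [b _ <-]]; exists (e (pi (a, b))), a, b.
  - by move=> p z [a [b [_ ->]]]; exists (pi (a, b)).
exists G; rewrite (pairing_domE GP); split => //.
- by exists ((e 0, e 0), e (pi (0, 0)))%N, 0%N, 0%N.
- by move=> _ [n _ <-]; exact: eK.
- by apply: (@card_le_of_inj _ _ _ _ e) => [n _|a b _ _ /einj]; first exists n.
Qed.

Lemma exists_maximal_pairing K : [set: nat] #<= K -> exists M,
  [/\ pairing_on (pairing_dom M) M, pairing_dom M `<=` K, [set: nat] #<= pairing_dom M &
      forall G, M `<` G -> pairing_on (pairing_dom G) G -> pairing_dom G `<=` K ->
        ~ ([set: nat] #<= pairing_dom G)].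
Proof.
move=> NK.
pose P G := [/\ pairing_on (pairing_dom G) G, pairing_dom G `<=` K &
                G = set0 \/ [set: nat] #<= pairing_dom G].
have [M [[MP MK MN] Mmax]] : exists M, P M /\ forall G, M `<` G -> ~ P G.
  apply: Zorn_bigcup => F FP Ftot; split.
  - by apply: pairing_on_bigcup => // G /FP[].
  - by move=> x [z [G FG Gz]]; have [_ + _] := FP _ FG; apply; exists z.
  - have [[G FG /set0P Gne]|] := pselect (exists2 G, F G & G != set0).
      right; have [_ _ [G_0|NG]] := FP _ FG; first by case: Gne; rewrite G_0.
      by apply: card_le_trans NG (subset_card_le _) => x [z Gz]; exists z, G.
    move=> /forall2NP FG0; left; apply/seteqP; split => // q [G FG Gq].
    by have [//|/negP/negPn/eqP G_0] := FG0 G; rewrite G_0 in Gq.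
exists M; split => // [|G MG GP GK NG]; last by apply: (Mmax G MG); split => //; right.
case: MN => // M0; have [G0 [[q G0q] G0P G0K NG0]] := exists_pairing_on_nat NK.
exfalso; apply: (Mmax G0); last by split => //; right.
by rewrite M0; split => // /(_ q G0q).
Qed.

(* Zorn's lemma gives a maximal injection D * D -> D with D a subset of K;
   if D were smaller than K it would extend to D `|` E for some E in K `\` D
   with |E| = |D|. *)
Theorem card_setX_le K : [set: nat] #<= K -> K `*` K #<= K.
Proof.
move=> NK; have [M [MP MK NM Mmax]] := exists_maximal_pairing NK.
set D := pairing_dom M in MP MK NM Mmax.
have DD := pairing_on_card MP.
have KD : K `\` D #<= D.
  have [//|DKD] := card_le_total (K `\` D) D.
  have [G [MG GP GK]] := pairing_on_extend MP MK NM DKD.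
  case: (Mmax G MG GP GK); apply: (card_le_trans NM); apply: subset_card_le.
  by move=> x [z Mz]; exists z; case: MG => + _; apply.
have {}KD : K #<= D.
  apply: card_le_trans (setU_card_le_sq DD NM (card_lexx D) KD).
  by apply: subset_card_le => x Kx; have [Dx|nDx] := pselect (D x); [left|right].
exact: card_le_trans (card_le_setX KD KD) (card_le_trans DD (subset_card_le MK)).
Qed.

End Hessenberg.

Lemma bigcup_card_le I T W (K : set W) (S : set I) (F : I -> set T) :
  [set: nat] #<= K -> S #<= K -> (forall i, S i -> F i #<= K) ->
  \bigcup_(i in S) F i #<= K.
Proof. by move=> /card_setX_le; exact: bigcup_card_le_sq. Qed.

Lemma setU_card_le T W (K : set W) (A B : set T) :
  [set: nat] #<= K -> A #<= K -> B #<= K -> A `|` B #<= K.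
Proof. by move=> NK; apply: setU_card_le_sq (card_setX_le NK) NK. Qed.

Lemma card_le_setU1 T U (A : set T) (B : set U) (p : T) :
  [set: nat] #<= B -> B #<= A `|` [set p] -> B #<= A.
Proof.
move=> NB BAp.
have NA : [set: nat] #<= A.
  apply: contrapT => /finite_setPn finA; apply/finite_setPn: NB.
  apply: card_le_finite BAp _; rewrite finite_setU; split => //; exact: finite_set1.
have A0 := card_le_nonempty NA (ex_intro _ 0%N I).
by apply: card_le_trans BAp _; apply: setU_card_le NA (card_lexx A) (set1_card_le _ A0).
Qed.

(** * Well-orders and the continuum as an ordinal *)

Section WellOrder.
Variable T : eqType.

Definition wo : rel T := sval (well_ordering_principle T).

Definition wlt (a b : T) := wo a b /\ a <> b.

Definition seg (t : T) : set T := [set s | wlt s t].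

Definition small_bounded (J : set T) U (L : set U) :=
  forall S, S `<=` J -> S #<= L -> exists u, J u /\ forall s, S s -> wlt s u.

Let wo_chainT : wo_chain wo predT.
Proof. apply: withinW; exact: (svalP (well_ordering_principle T)). Qed.

Lemma wo_refl a : wo a a.
Proof. exact: (wo_chain_reflexive wo_chainT). Qed.

Lemma wo_total a b : wo a b \/ wo b a.
Proof. exact/orP/(wo_chainW wo_chainT). Qed.

Lemma wo_anti a b : wo a b -> wo b a -> a = b.
Proof. by move=> ab ba; apply: (wo_chain_antisymmetric wo_chainT) => //; rewrite ab ba. Qed.

Lemma wo_min (P : set T) : P !=set0 -> exists z, P z /\ forall x, P x -> wo z x.
Proof.
move=> [x Px].
have [|z [[zP zmin] _]] := svalP (well_ordering_principle T) [pred y | `[< P y >]].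
  by exists x; rewrite unfold_in /= asboolE.
exists z; split; first by move: zP; rewrite unfold_in /= asboolE.
by move=> y Py; apply: zmin; rewrite unfold_in /= asboolE.
Qed.

Lemma wo_trans a b c : wo a b -> wo b c -> wo a c.
Proof.
move=> ab bc.
have [z [Pz zmin]] := @wo_min [set x | x = a \/ x = b \/ x = c] (ex_intro _ a (or_introl erefl)).
case: Pz => [|[|]] ?; subst z; first by apply: zmin; right; right.
  by rewrite (@wo_anti a b) //; apply: zmin; left.
by rewrite -(@wo_anti b c) //; apply: zmin; right; left.
Qed.

Lemma wlt_wo_trans a b c : wlt a b -> wo b c -> wlt a c.
Proof.
move=> [ab nab] bc; split; first exact: wo_trans bc.
by move=> ac; subst c; apply: nab; exact: wo_anti.
Qed.

Lemma wlt_woN a b : wlt a b -> ~ wo b a.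
Proof. by move=> [ab nab] ba; apply: nab; exact: wo_anti. Qed.

Lemma wltNwo a b : ~ wlt a b -> wo b a.
Proof.
move=> nab; have [ab|//] := wo_total a b.
by have [->|] := pselect (a = b); [exact: wo_refl|move=> ?; case: nab].
Qed.

Lemma wlt_wf : well_founded wlt.
Proof.
move=> a; apply: contrapT => na.
have [z [nz zmin]] := @wo_min [set x | ~ Acc wlt x] (ex_intro _ a na).
apply: nz; constructor => y yz; apply: contrapT => ny.
exact: wlt_woN yz (zmin y ny).
Qed.

Lemma small_bounded_le J U U' (L : set U) (L' : set U') :
  small_bounded J L -> L' #<= L -> small_bounded J L'.
Proof. by move=> JL LL S SJ SL; apply: JL => //; exact: card_le_trans SL LL. Qed.

End WellOrder.

Lemma infinite_cont : [set: nat] #<= cont.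
Proof.
apply: (@card_le_of_inj _ _ _ _ (fun n => [set n])) => // a b _ _ ab.
by have : [set b] a by rewrite -ab.
Qed.

Lemma lt_cf_cont_le U V (A : set U) (B : set V) :
  A #<= B -> lt_cf_cont B -> lt_cf_cont A.
Proof.
move=> AB hB [F [Fsmall FU]]; apply: hB.
have [a0 Aa0] : A !=set0.
  apply/set0P/negP => /eqP A0; move: FU; rewrite A0 bigcup_set0 => c0.
  by have : cont set0 by []; rewrite -c0.
have [b0 _] := card_le_nonempty AB (ex_intro _ a0 Aa0).
have [g [gB ginj]] := card_le_inj b0 AB.
exists (fun b => [set w | exists a, [/\ A a, g a = b & F a w]]); split.
  move=> b Bb small.
  have [w [a [Aa gab _]]] := card_le_nonempty small (ex_intro _ set0 I).
  apply: (Fsmall a Aa); apply: (card_le_trans small); apply: subset_card_le.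
  move=> w' [a' [Aa' ga'b Fa'w']]; suff -> : a = a' by [].
  by apply: ginj => //; rewrite gab ga'b.
apply/seteqP; split => // w _.
have : (\bigcup_(a in A) F a) w by rewrite FU.
by case=> a Aa Faw; exists (g a); [exact: gB|exists a].
Qed.

Lemma lindelof_le_of_card (T : topologicalType) (A : set T) W (K : set W) :
  A #<= K -> lindelof_le A K.
Proof.
move=> AK cov _ Acov.
have /choice[pk hpk] : forall z, exists V, A z -> cov V /\ V z.
  move=> z; have [/Acov[V cV Vz]|nAz] := pselect (A z); first by exists V.
  by exists set0 => /nAz.
exists (pk @` A); split; first by move=> _ [z /hpk[cz _] <-].
split; last by move=> z Az; exists (pk z); [exists z|have [] := hpk z Az].
exact: card_le_trans (card_image_le _ _) AK.
Qed.

Lemma exists_continuum_ordinal : exists C : set (set nat),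
  [/\ forall t s, C t -> wlt s t -> C s,
      forall t, C t -> ~ (cont #<= seg t) & cont #<= C].
Proof.
have [ex|nex] := pselect (exists t : set nat, cont #<= seg t).
  have [t0 [t0_long t0_min]] := wo_min ex.
  exists (seg t0); split => //; first by move=> t s tt0 st; exact: wlt_wo_trans st tt0.1.
  by move=> t tt0 /t0_min; exact: wlt_woN tt0.
by exists setT; split => // t _ tc; apply: nex; exists t.
Qed.

Section ContinuumOrdinal.
Variable C : set (set nat).
Hypothesis C_down : forall t s, C t -> wlt s t -> C s.
Hypothesis C_short : forall t, C t -> ~ (cont #<= seg t).
Hypothesis C_long : cont #<= C.

Lemma C_no_max t : C t -> exists u, C u /\ wlt t u.
Proof.
move=> Ct; apply: contrapT => /forallNP nomax; apply: (C_short Ct).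
apply: (card_le_setU1 (p := t) infinite_cont); apply: (card_le_trans C_long).
apply: subset_card_le => u Cu; have [->|ut] := pselect (u = t); first by right.
by left; split => //; apply: wltNwo => tu; apply: (nomax u).
Qed.

Lemma lt_cf_small_bounded U (L : set U) : lt_cf_cont L -> small_bounded C L.
Proof.
move=> hL S SC SL; apply: contrapT => nb.
have unb u : C u -> exists s, S s /\ wlt u s.
  move=> /C_no_max[u' [Cu' uu']]; apply: contrapT => ns; apply: nb.
  exists u'; split => // s Ss; apply: contrapT => su'.
  by apply: ns; exists s; split => //; exact: wlt_wo_trans uu' (wltNwo su').
have [h [hC hinj]] := card_le_inj set0 C_long.
have [s0 [Ss0 _]] := unb _ (hC set0 I).
have [l0 _] := card_le_nonempty SL (ex_intro _ s0 Ss0).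
have [g [gL ginj]] := card_le_inj l0 SL.
apply: hL; exists (fun l => [set w | exists s, [/\ S s, g s = l & wlt (h w) s]]); split.
  move=> l Ll small.
  have [w [s [Ss gsl _]]] := card_le_nonempty small (ex_intro _ set0 I).
  apply: (C_short (SC _ Ss)); apply: (card_le_trans small).
  apply: (@card_le_of_inj _ _ _ _ h) => [w' [s' [Ss' gs'l hws']]|a b _ _]; last exact: hinj.
  suff <- : s' = s by [].
  by apply: ginj => //; rewrite gs'l gsl.
apply/seteqP; split => // w _.
by have [s [Ss hws]] := unb _ (hC w I); exists (g s); [exact: gL|exists s].
Qed.

Lemma exists_small_bounded W (K : set W) : [set: nat] #<= K -> ~ (cont #<= K) ->
  exists J, J `<=` C /\ small_bounded J K.
Proof.
move=> NK nK.
have [J [JC [Jsmall Jlarge]]] : exists J, J `<=` C /\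
    (forall s, J s -> seg s #<= K) /\ ~ (J #<= K).
  have [ex|nex] := pselect (exists t, C t /\ ~ (seg t #<= K)).
    have [j [[Cj nj] jmin]] := wo_min ex.
    exists (seg j); split; first by move=> s sj; exact: C_down Cj sj.
    split => // s sj; apply: contrapT => ns.
    exact: wlt_woN sj (jmin s (conj (C_down Cj sj) ns)).
  exists C; split => //; split; last by move=> CK; apply: nK; exact: card_le_trans CK.
  by move=> s Cs; apply: contrapT => ns; apply: nex; exists s.
exists J; split => // S SJ SK; apply: contrapT => nb; apply: Jlarge.
have JU : J `<=` \bigcup_(s in S) (seg s `|` [set s]).
  move=> u Ju; apply: contrapT => nu; apply: nb; exists u; split => // s Ss.
  apply: contrapT => nsu; apply: nu; exists s => //.
  by have [<-|us] := pselect (u = s); [right|left; split => //; exact: wltNwo].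
apply: (card_le_trans (subset_card_le JU)); apply: bigcup_card_le => // s Ss.
apply: setU_card_le => //; first exact: Jsmall (SJ _ Ss).
by apply: set1_card_le; exact: card_le_nonempty NK (ex_intro _ 0%N I).
Qed.

(** * The tower *)

Section Tower.
Variable X : topologicalType.
Hypothesis X_fair : c_fair X.
Hypothesis X_gt_c : ~ ([set: X] #<= cont).
Variable x0 : X.
Variable nb : X -> set X.
Hypothesis nb_open : forall x, open (nb x).
Hypothesis nb_self : forall x, nb x x.
Hypothesis nb_small : forall x, nb x #<= cont.
Variable B : set X.
Hypothesis B_small : B #<= cont.
Hypothesis B_large : cont #<= B.

Definition tower_step (t : set nat) (f : forall s, wlt s t -> set X) : set X :=
  closure (B `|` [set z | exists s (st : wlt s t) x, f s st x /\ nb x z]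
     `|` [set xget x0 (~` [set z | exists s (st : wlt s t), f s st z])]).

Definition tower : set nat -> set X := Fix (@wlt_wf _) (fun=> set X) tower_step.

Definition below t := \bigcup_(s in seg t) tower s.

(* The default [x0] only occurs if [below t] covers [X], see [fresh_notin_below]. *)
Definition fresh t := xget x0 (~` below t).

Lemma towerE t : tower t =
  closure (B `|` \bigcup_(s in seg t) \bigcup_(x in tower s) nb x `|` [set fresh t]).
Proof.
rewrite /tower Fix_eq; last first.
  move=> t' f g fg; congr tower_step.
  by apply: functional_extensionality_dep => s; apply: functional_extensionality_dep.
rewrite /tower_step /fresh /below -/tower; congr (closure (_ `|` _ `|` [set xget x0 (~` _)])).
- apply/seteqP; split => z; last by move=> [s st [x Qx nbxz]]; exists s, st, x.
  by move=> [s [st [x [Qx nbxz]]]]; exists s => //; exists x.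
- apply/seteqP; split => z; first by move=> [s [st Qz]]; exists s.
  by move=> [s st Qz]; exists s, st.
Qed.

Lemma tower_closed t : closed (tower t).
Proof. by rewrite towerE; exact: closed_closure. Qed.

Lemma nb_sub_tower s t x : wlt s t -> tower s x -> nb x `<=` tower t.
Proof.
by move=> st Qx z nbz; rewrite towerE; apply: subset_closure; left; right; exists s => //; exists x.
Qed.

Lemma tower_mono s t : wlt s t -> tower s `<=` tower t.
Proof. by move=> st x Qx; exact: nb_sub_tower st Qx _ (nb_self x). Qed.

Lemma fresh_in_tower t : tower t (fresh t).
Proof. by rewrite towerE; apply: subset_closure; right. Qed.

Lemma tower_small t : C t -> tower t #<= cont.
Proof.
elim/(well_founded_induction (@wlt_wf (set nat))): t => t IH Ct.
have segC s : seg t s -> C s by exact: C_down Ct.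
have /X_fair : B `|` \bigcup_(s in seg t) \bigcup_(x in tower s) nb x `|` [set fresh t] #= cont.
  apply/card_eqPle; split; last first.
    by apply: card_le_trans B_large (subset_card_le _) => z Bz; left; left.
  apply: setU_card_le infinite_cont _ (set1_card_le _ (ex_intro _ set0 I)).
  apply: setU_card_le infinite_cont B_small _.
  apply: bigcup_card_le infinite_cont (card_leT _) _ => s st.
  exact: bigcup_card_le infinite_cont (IH s st (segC s st)) (fun x _ => nb_small x).
by rewrite -towerE => /card_eqPle[].
Qed.

Lemma fresh_notin_below t : C t -> ~ below t (fresh t).
Proof.
move=> Ct; apply: (@xgetPex _ x0 (~` below t)); apply: contrapT => full.
apply: X_gt_c; apply: card_le_trans (subset_card_le (_ : [set: X] `<=` below t)) _.
  by move=> z _; apply: contrapT => nz; apply: full; exists z.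
apply: bigcup_card_le infinite_cont (card_leT _) _ => s st.
exact: tower_small (C_down Ct st).
Qed.

Lemma fresh_notin_tower s t : C t -> wlt s t -> ~ tower s (fresh t).
Proof. by move=> Ct st Qs; apply: (fresh_notin_below Ct); exists s. Qed.

Definition union_tower J := \bigcup_(t in J) tower t.

Lemma union_tower_closed J :
  (forall x : X, exists L : set (set nat), tightness_le x L /\ small_bounded J L) ->
  closed (union_tower J).
Proof.
move=> JL x clx; have [L [xL JLb]] := JL x.
have [A [AJ [AL clA]]] := xL _ clx.
have /choice[idx hidx] : forall z, exists t, A z -> J t /\ tower t z.
  move=> z; have [/AJ[t Jt Qz]|nAz] := pselect (A z); first by exists t.
  by exists set0 => /nAz.
have idxJ : idx @` A `<=` J by move=> _ [z /hidx[Jz _] <-].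
have [u [Ju hu]] := JLb _ idxJ (card_le_trans (card_image_le _ _) AL).
exists u => //; apply: tower_closed; apply: closure_subset clA => z Az.
have [_ Qz] := hidx z Az; apply: tower_mono (hu _ _) _ Qz; exact/imageP.
Qed.

Lemma union_tower_open J : (forall t, J t -> exists u, J u /\ wlt t u) ->
  open (union_tower J).
Proof.
move=> nomax; suff -> : union_tower J = \bigcup_(t in J) \bigcup_(x in tower t) nb x.
  by apply: bigcup_open => t _; exact: bigcup_open.
apply/seteqP; split => z [t Jt]; first by move=> Qz; exists t => //; exists z.
move=> [x Qx nbxz]; have [u [Ju tu]] := nomax t Jt.
by exists u => //; exact: nb_sub_tower tu Qx _ nbxz.
Qed.

Lemma union_tower_not_lindelof J U (K : set U) : J `<=` C -> small_bounded J K ->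
  K !=set0 -> closed (union_tower J) -> ~ lindelof_le (union_tower C) K.
Proof.
move=> JC JK K0 VJcl VCK.
pose cover t := \bigcup_(x in tower t) nb x.
pose cov := [set V | (exists2 t, J t & V = cover t) \/ V = ~` union_tower J].
have cov_open V : cov V -> open V.
  by move=> [[t Jt ->]|->]; [exact: bigcup_open|exact: closed_openC].
have VC_cov : union_tower C `<=` \bigcup_(V in cov) V.
  move=> z _; have [[t Jt Qz]|nz] := pselect (union_tower J z).
    by exists (cover t); [left; exists t|exists z].
  by exists (~` union_tower J) => //; right.
have [D [Dcov [DK VD]]] := VCK cov cov_open VC_cov.
have /choice[idx hidx] : forall V, exists t,
    (exists2 t, J t & V = cover t) -> J t /\ V = cover t.
  move=> V; have [[t Jt ->]|nV] := pselect (exists2 t, J t & V = cover t).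
    by exists t.
  by exists set0 => /nV.
pose DJ := [set V | D V /\ exists2 t, J t & V = cover t].
have idxJ : idx @` DJ `<=` J by move=> _ [V [_ /hidx[Jt _]] <-].
have idxK : idx @` DJ #<= K.
  by apply: card_le_trans (card_image_le _ _) (card_le_trans _ DK); apply: subset_card_le => V [].
have [u [Ju hu]] := JK _ idxJ idxK.
have [u' [Ju' uu']] : exists u', J u' /\ wlt u u'.
  have uJ : [set u] `<=` J by move=> _ ->.
  by have [u' [Ju' hu']] := JK _ uJ (set1_card_le _ K0); exists u'; split => //; exact: hu'.
have : union_tower C (fresh u') by exists u'; [exact: JC|exact: fresh_in_tower].
move=> /VD[V DV Vy]; case: (Dcov _ DV) => [V_J|V_co]; last first.
  by move: Vy; rewrite V_co; apply; exists u' => //; exact: fresh_in_tower.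
have [_ V_cover] := hidx V V_J.
have tu : wlt (idx V) u by apply: hu; exists V.
move: Vy; rewrite V_cover => -[x Qx Oxy].
exact: fresh_notin_tower (JC _ Ju') uu' (nb_sub_tower tu Qx Oxy).
Qed.

Lemma union_tower_card : union_tower C #= cont.
Proof.
apply/card_eqPle; split.
  exact: bigcup_card_le infinite_cont (card_leT _) (fun t Ct => tower_small Ct).
apply: card_le_trans C_long _; apply: (@card_le_of_inj _ _ _ _ fresh).
  by move=> t Ct; exists t => //; exact: fresh_in_tower.
move=> s t Cs Ct st; apply: contrapT => nst.
have [so|to] := wo_total s t.
  by apply: (fresh_notin_tower Ct (conj so nst)); rewrite -st; exact: fresh_in_tower.
by apply: (fresh_notin_tower Cs (conj to (nesym nst))); rewrite st; exact: fresh_in_tower.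
Qed.

Hypothesis X_tight : forall x : X, tightness_lt_cf_cont x.

Lemma exists_bounded_subtower U (K : set U) : [set: nat] #<= K -> ~ (cont #<= K) ->
  exists J, [/\ J `<=` C, small_bounded J K &
    forall x : X, exists L : set (set nat), tightness_le x L /\ small_bounded J L].
Proof.
move=> NK nK; have /choice[Kx hK] := X_tight.
have [allK|/existsNP[x nx]] := pselect (forall x, Kx x #<= K).
  have [J [JC JK]] := exists_small_bounded NK nK.
  exists J; split => // x; exists (Kx x); split; first exact: (hK x).2.
  exact: small_bounded_le JK (allK x).
have [//|KKx] := card_le_total (Kx x) K.
have K_lt := lt_cf_cont_le KKx (hK x).1.
exists C; split => //; first exact: lt_cf_small_bounded.
by move=> y; exists (Kx y); split; [exact: (hK y).2|exact: lt_cf_small_bounded (hK y).1].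
Qed.

Lemma union_tower_lindelof : lindelof_number_eq_cont (union_tower C).
Proof.
split; first by case/card_eqPle: union_tower_card => VC _; exact: lindelof_le_of_card.
move=> [K [nK [NK VK]]].
have [J [JC JK Jtight]] := exists_bounded_subtower NK nK.
have K0 := card_le_nonempty NK (ex_intro _ 0%N I).
exact: union_tower_not_lindelof JC JK K0 (union_tower_closed Jtight) VK.
Qed.

Lemma union_tower_clopen : open (union_tower C) /\ closed (union_tower C).
Proof.
split; first exact: union_tower_open (fun t Ct => C_no_max Ct).
apply: union_tower_closed => x; have [L [L_lt xL]] := X_tight x.
by exists L; split; [exact: xL|exact: lt_cf_small_bounded].
Qed.

Lemma union_tower_spec : [/\ open (union_tower C), closed (union_tower C),
  union_tower C #= cont & lindelof_number_eq_cont (union_tower C)].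
Proof.
have [V_open V_closed] := union_tower_clopen.
by split => //; [exact: union_tower_card|exact: union_tower_lindelof].
Qed.

End Tower.
End ContinuumOrdinal.

Unset Implicit Arguments. Set Strict Implicit.

Theorem theorem4p2 (X : topologicalType) :
  locally_c X -> c_fair X ->
  (forall x : X, tightness_lt_cf_cont x) ->
  cont #<= [set: X] -> ~ ([set: X] #<= cont) ->
  exists U : set X, open U /\ closed U /\ U #= cont /\ lindelof_number_eq_cont U.
Proof.
move=> X_loc X_fair X_tight X_ge_c X_gt_c.
have [x0 _] := card_le_nonempty X_ge_c (ex_intro _ set0 I).
have /choice[nb hnb] : forall x : X, exists V, [/\ open V, V x & V #<= cont].
  move=> x; have [N [+ Nsmall]] := X_loc x; rewrite nbhsE => -[V [oV Vx] VN].
  by exists V; split => //; exact: card_le_trans (subset_card_le VN) Nsmall.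
have [b [_ binj]] := card_le_inj x0 X_ge_c.
have B_small : b @` cont #<= cont by exact: card_image_le.
have B_large : cont #<= b @` cont.
  by apply: (@card_le_of_inj _ _ _ _ b) => [a _|a a' _ _]; [exists a|exact: binj].
have [C [C_down C_short C_long]] := exists_continuum_ordinal.
have nb_open x : open (nb x) by have [] := hnb x.
have nb_self x : nb x x by have [] := hnb x.
have nb_small x : nb x #<= cont by have [] := hnb x.
have [V_open V_closed V_card V_lindelof] := union_tower_spec C_down C_short C_long
  X_fair X_gt_c x0 nb_open nb_self nb_small B_small B_large X_tight.
by exists (union_tower x0 nb (b @` cont) C).
Qed.
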